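(* Let $\mathbb{k}$ be a field, $m\ge2$, and $f_1,\dots,f_m\in\mathbb{k}[x_1,\dots,x_n]$ with $\gcd(f_1,\dots,f_m)=1$. Then there exists an infinite sequence $\{h_i\}_{i\ge1}$ of elements of the ideal $(f_1,\dots,f_m)$ such that $\gcd(h_i,h_j)=1$ for all $i\ne j$. *)

From HB Require Import structures.
From mathcomp Require Import all_boot all_order all_algebra.
From mathcomp Require Export mpoly.
Set Implicit Arguments. Unset Strict Implicit. Unset Printing Implicit Defensive.
Import GRing.Theory.
Local Open Scope ring_scope.

Definition mdvd (k : fieldType) (n : nat) (d p : {mpoly k[n]}) : Prop :=
  exists q : {mpoly k[n]}, p = q * d.

Definition munit (k : fieldType) (n : nat) (d : {mpoly k[n]}) : Prop :=
  exists e : {mpoly k[n]}, d * e = 1.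

Definition gcd_one (k : fieldType) (n : nat) (I : finType) (f : I -> {mpoly k[n]}) : Prop :=
  forall d : {mpoly k[n]}, (forall i, mdvd d (f i)) -> munit d.

Definition coprime2 (k : fieldType) (n : nat) (g h : {mpoly k[n]}) : Prop :=
  forall d : {mpoly k[n]}, mdvd d g -> mdvd d h -> munit d.

Definition in_ideal (k : fieldType) (n m : nat) (f : 'I_m -> {mpoly k[n]}) (h : {mpoly k[n]}) : Prop :=
  exists c : 'I_m -> {mpoly k[n]}, h = \sum_(i < m) c i * f i.

From mathcomp Require Import all_boot all_order all_algebra.
From mathcomp Require Import mpoly.
From Stdlib Require Import Classical ClassicalEpsilon.
From mathcomp Require Import zify ring.
Set Implicit Arguments. Unset Strict Implicit. Unset Printing Implicit Defensive.
Import GRing.Theory.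
Local Open Scope ring_scope.

(* k[x_1, ..., x_n] is a unique factorization domain, and in a UFD the ideal
   I = (f_1, ..., f_m) with gcd 1 contains, for every nonzero P, a nonzero h
   coprime to P: by induction on the prime factors q of P, if the current h is
   divisible by q, add (product of the other factors) * f_k with q not dividing
   f_k.  Taking h_i coprime to h_0 * ... * h_(i-1) gives the sequence.
   Unique factorization is proved by induction on n through the isomorphism
   k[x_1, ..., x_(n+1)] = k[x_1, ..., x_n][X] and Gauss's lemma: over a UFD,
   irreducible polynomials are prime. *)

Lemma classical_ex_minn (P : nat -> Prop) :
  (exists n, P n) -> exists n, P n /\ forall k, (k < n)%N -> ~ P k.
Proof.
move=> [n Pn]; apply: NNPP => noMin; suff /(_ n) : forall i, ~ P i by [].
elim/ltn_ind=> i IH Pi; apply: noMin; exists i; split=> // k /IH.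
Qed.

Section Divisibility.
Variable R : idomainType.
Implicit Types a b c d p q u : R.

Definition dvdr a b := exists q, b = q * a.

Definition coprimer a b := forall d, dvdr d a -> dvdr d b -> d \is a GRing.unit.

Definition irreducibler p := [/\ p != 0, p \isn't a GRing.unit &
  forall a b, p = a * b -> a \is a GRing.unit \/ b \is a GRing.unit].

Definition primer p := [/\ p != 0, p \isn't a GRing.unit &
  forall a b, dvdr p (a * b) -> dvdr p a \/ dvdr p b].

Definition factorization (P : R -> Prop) a := exists s : seq R,
  exists2 u, u \is a GRing.unit & {in s, forall x, P x} /\ a = u * \prod_(x <- s) x.

Definition has_irreducible_factorizations :=
  forall a, a != 0 -> factorization irreducibler a.

Definition irreducibles_prime := forall p, irreducibler p -> primer p.

Lemma dvdr_refl a : dvdr a a. Proof. by exists 1; rewrite mul1r. Qed.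

Lemma dvdr0 a : dvdr a 0. Proof. by exists 0; rewrite mul0r. Qed.

Lemma dvdr_trans b a c : dvdr a b -> dvdr b c -> dvdr a c.
Proof. by move=> [q ->] [r ->]; exists (r * q); rewrite mulrA. Qed.

Lemma dvdr_mull c a b : dvdr a b -> dvdr a (c * b).
Proof. by move=> [q ->]; exists (c * q); rewrite mulrA. Qed.

Lemma dvdr_mulr c a b : dvdr a b -> dvdr a (b * c).
Proof. by rewrite mulrC; apply: dvdr_mull. Qed.

Lemma dvdrD a b c : dvdr a b -> dvdr a c -> dvdr a (b + c).
Proof. by move=> [q ->] [r ->]; exists (q + r); rewrite mulrDl. Qed.

Lemma dvdr_addr a b c : dvdr a b -> dvdr a (b + c) <-> dvdr a c.
Proof.
move=> [q ->]; split=> [[r er]|]; last by apply: dvdrD; exists q.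
by exists (r - q); rewrite mulrBl -er addrAC subrr add0r.
Qed.

Lemma dvdr_unit a u : u \is a GRing.unit -> dvdr a u -> a \is a GRing.unit.
Proof. by move=> Uu [q eu]; move: Uu; rewrite eu unitrM => /andP[]. Qed.

Lemma dvdr_prod_mem x (s : seq R) : x \in s -> dvdr x (\prod_(y <- s) y).
Proof.
elim: s => // y s IH; rewrite in_cons big_cons => /orP[/eqP->|/IH].
  exact/dvdr_mulr/dvdr_refl.
exact: dvdr_mull.
Qed.

Lemma primer_dvdr_prod p (s : seq R) :
  primer p -> dvdr p (\prod_(x <- s) x) -> exists2 x, x \in s & dvdr p x.
Proof.
case=> _ pNU p_prime; elim: s => [|y s IH].
  by rewrite big_nil => /(dvdr_unit (unitr1 R)); rewrite (negbTE pNU).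
rewrite big_cons => /p_prime [|/IH [x xs px]]; first by exists y; rewrite ?mem_head.
by exists x; rewrite // in_cons xs orbT.
Qed.

Lemma primer_irreducible p : primer p -> irreducibler p.
Proof.
case=> p0 pNU p_prime; split=> // a b ep.
have /p_prime : dvdr p (a * b) by rewrite -ep; apply: dvdr_refl.
case=> [[q ea]|[q eb]]; [right | left]; apply/unitrPr; exists q;
  apply: (mulfI p0); rewrite mulr1 [RHS]ep ?ea ?eb; ring.
Qed.

Lemma irreducible_dvdr p a :
  irreducibler p -> a \isn't a GRing.unit -> dvdr a p -> dvdr p a.
Proof.
case=> _ _ p_irr aNU [w ep]; case: (p_irr _ _ ep) => [Uw|Ua].
  by exists w^-1; rewrite ep mulKr.
by rewrite Ua in aNU.
Qed.

Lemma reducible_split a : a != 0 -> a \isn't a GRing.unit -> ~ irreducibler a ->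
  exists b c, [/\ a = b * c, b \isn't a GRing.unit & c \isn't a GRing.unit].
Proof.
move=> a0 aNU a_red; apply: NNPP => no_split; apply: a_red; split=> // b c eab.
by apply: NNPP => /not_or_and [/negP bNU /negP cNU]; apply: no_split; exists b, c.
Qed.

Lemma pairwise_coprime_seq (S : R -> Prop) :
  (forall P, P != 0 -> exists h, [/\ S h, h != 0 & coprimer h P]) ->
  exists h : nat -> R, (forall i, S (h i)) /\
    (forall i j, i <> j -> coprimer (h i) (h j)).
Proof.
move=> coprime_to.
have [C C_spec] : exists C : R -> R, forall P,
    P != 0 -> [/\ S (C P), C P != 0 & coprimer (C P) P].
  apply: (choice (fun P h => P != 0 -> [/\ S h, h != 0 & coprimer h P])) => P.
  have [->|/coprime_to [h hP]] := eqVneq P 0; first by exists 0.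
  by exists h.
pose prefix i := iter i (fun P => P * C P) 1.
have prefix_neq0 i : prefix i != 0.
  elim: i => [|i IH] /=; first exact: oner_neq0.
  by case: (C_spec _ IH) => _ CP0 _; rewrite mulf_neq0.
have dvdr_prefix i j : (i < j)%N -> dvdr (C (prefix i)) (prefix j).
  elim: j => // j IH; rewrite ltnS leq_eqVlt => /orP[/eqP->|/IH]; last exact: dvdr_mulr.
  exact/dvdr_mull/dvdr_refl.
have coprime_lt i j : (i < j)%N -> coprimer (C (prefix i)) (C (prefix j)).
  move=> ij d di dj; case: (C_spec _ (prefix_neq0 j)) => _ _; apply=> //.
  exact: dvdr_trans di (dvdr_prefix _ _ ij).
exists (C \o prefix); split=> [i|i j /eqP]; first by case: (C_spec _ (prefix_neq0 i)).
rewrite neq_ltn => /orP[] /coprime_lt ij d di dj; first exact: ij.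
exact: ij d dj di.
Qed.

Section UniqueFactorization.
Hypothesis factorizable : has_irreducible_factorizations.
Hypothesis irreducible_prime : irreducibles_prime.

Lemma prime_factorization a : a != 0 -> factorization primer a.
Proof.
move=> /factorizable [s [u Uu [s_irr ea]]].
by exists s; exists u => //; split=> // x /s_irr /irreducible_prime.
Qed.

Lemma exists_prime_dvdr a :
  a != 0 -> a \isn't a GRing.unit -> exists2 p, primer p & dvdr p a.
Proof.
move=> /prime_factorization [[|p s] [u Uu [s_prime ->]]] aNU.
  by rewrite big_nil mulr1 Uu in aNU.
exists p; first by apply: s_prime; rewrite mem_head.
by rewrite big_cons; apply/dvdr_mull/dvdr_mulr/dvdr_refl.
Qed.

End UniqueFactorization.

End Divisibility.

Section IdealAvoidance.
Variables (R : idomainType) (m : nat) (f : 'I_m -> R).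

Definition ideal_mem (h : R) := exists c : 'I_m -> R, h = \sum_(i < m) c i * f i.

Lemma ideal_mem_gen k : ideal_mem (f k).
Proof.
exists (fun i => (i == k)%:R); rewrite (bigD1 k) //= eqxx mul1r big1 ?addr0 //.
by move=> i /negbTE ->; rewrite mul0r.
Qed.

Lemma ideal_memD g h : ideal_mem g -> ideal_mem h -> ideal_mem (g + h).
Proof.
move=> [c ->] [c' ->]; exists (fun i => c i + c' i); rewrite -big_split /=.
by apply: eq_bigr => i _; rewrite mulrDl.
Qed.

Lemma ideal_memMl a h : ideal_mem h -> ideal_mem (a * h).
Proof.
move=> [c ->]; exists (fun i => a * c i); rewrite mulr_sumr.
by apply: eq_bigr => i _; rewrite mulrA.
Qed.

Hypothesis gcd1 : forall d, (forall i, dvdr d (f i)) -> d \is a GRing.unit.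

Lemma gen_not_dvdr d : d \isn't a GRing.unit -> exists k, ~ dvdr d (f k).
Proof.
move=> /negP dNU; apply: NNPP => all_dvdr; apply: dNU; apply: gcd1 => i.
by apply: NNPP => ndvd; apply: all_dvdr; exists i.
Qed.

Lemma ideal_prime_avoidance (s : seq R) : {in s, forall p, primer p} ->
  exists h, [/\ ideal_mem h, h != 0 & {in s, forall p, ~ dvdr p h}].
Proof.
elim: s => [|q s IH] s_prime.
  have [k n0fk] := gen_not_dvdr (negbT (unitr0 R)).
  exists (f k); split=> //; first exact: ideal_mem_gen.
  by apply/eqP=> fk0; apply: n0fk; rewrite fk0; apply: dvdr0.
have q_prime : primer q by apply: s_prime; rewrite mem_head.
have [_ qNU q_prime'] := q_prime.
have {}s_prime : {in s, forall p, primer p}.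
  by move=> p ps; apply: s_prime; rewrite in_cons ps orbT.
have [h [Ih h0 s_ndvd]] := IH s_prime.
have [qh|nqh] := classic (dvdr q h); last first.
  by exists h; split=> // p; rewrite in_cons => /orP[/eqP->|/s_ndvd].
have [k nqfk] := gen_not_dvdr qNU.
have nq_prod : ~ dvdr q (\prod_(p <- s) p).
  move=> /(primer_dvdr_prod q_prime) [p ps qp]; apply: (s_ndvd p ps).
  have p_irr := primer_irreducible (s_prime p ps).
  by apply: dvdr_trans qh; apply: irreducible_dvdr p_irr qNU qp.
have nqh' : ~ dvdr q (h + \prod_(p <- s) p * f k).
  by move=> /(dvdr_addr _ qh) /q_prime' [].
exists (h + \prod_(p <- s) p * f k); split.
- by apply: ideal_memD => //; apply/ideal_memMl/ideal_mem_gen.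
- by apply/eqP=> h0'; apply: nqh'; rewrite h0'; apply: dvdr0.
move=> p; rewrite in_cons => /orP[/eqP-> //|ps].
by rewrite addrC => /(dvdr_addr _ (dvdr_mulr _ (dvdr_prod_mem ps))); apply: s_ndvd.
Qed.

Hypothesis factorizable : has_irreducible_factorizations R.
Hypothesis irreducible_prime : irreducibles_prime R.

Lemma ideal_coprime_elt P :
  P != 0 -> exists h, [/\ ideal_mem h, h != 0 & coprimer h P].
Proof.
move=> /factorizable [s [u Uu [s_irr eP]]].
have [|h [Ih h0 s_ndvd]] := ideal_prime_avoidance (s := s).
  by move=> p /s_irr /irreducible_prime.
exists h; split=> // d dh dP; apply: NNPP => /negP dNU.
have d0 : d != 0.
  by apply: contra h0 => /eqP d0; case: dh => q ->; rewrite d0 mulr0.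
have [r r_prime rd] := exists_prime_dvdr factorizable irreducible_prime d0 dNU.
have [[_ rNU r_dvdr] rP] := (r_prime, dvdr_trans rd dP).
move: rP; rewrite eP => /r_dvdr [/(dvdr_unit Uu)|]; first by rewrite (negbTE rNU).
move=> /(primer_dvdr_prod r_prime) [p ps rp]; apply: (s_ndvd p ps).
apply: dvdr_trans dh; apply: dvdr_trans rd.
exact: irreducible_dvdr (s_irr p ps) rNU rp.
Qed.

Lemma ideal_pairwise_coprime_seq : exists h : nat -> R,
  (forall i, ideal_mem (h i)) /\ (forall i j, i <> j -> coprimer (h i) (h j)).
Proof. exact: pairwise_coprime_seq ideal_coprime_elt. Qed.

End IdealAvoidance.

Section GaussLemma.
Variable A : idomainType.
Implicit Types (a c e : A) (f g p q r : {poly A}).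

Lemma polyC_unit a : (a%:P \is a GRing.unit) = (a \is a GRing.unit).
Proof.
rewrite poly_unitE coefC /= size_polyC.
by have [->|] := eqVneq a 0; rewrite ?unitr0 ?andbF.
Qed.

Lemma poly_unit_size p : p \is a GRing.unit -> size p = 1%N.
Proof. by rewrite poly_unitE => /andP[/eqP]. Qed.

Lemma dvdr_polyC a g : dvdr a%:P g <-> forall i, dvdr a g`_i.
Proof.
split=> [[q ->] i|]; first by exists q`_i; rewrite coefMC.
move=> /(choice (fun i (x : A) => g`_i = x * a)) [Q gQ].
exists (\poly_(i < size g) Q i); apply/polyP => i.
rewrite coefMC coef_poly; case: ltnP => // gi.
by rewrite mul0r nth_default.
Qed.

Lemma primer_polyC a : primer a -> primer a%:P.
Proof.
case=> a0 aNU a_prime; split; rewrite ?polyC_eq0 ?polyC_unit //.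
move=> f g; rewrite !dvdr_polyC => afg; apply: NNPP => /not_or_and [].
move=> /not_all_ex_not /classical_ex_minn [i [afi fi_min]].
move=> /not_all_ex_not /classical_ex_minn [j [agj gj_min]].
have lt_i_ij : (i < (i + j).+1)%N by rewrite ltnS leq_addr.
have := afg (i + j)%N; rewrite coefM (bigD1 (Ordinal lt_i_ij)) //= addKn.
have other_terms : dvdr a (\sum_(k < (i + j).+1 | k != Ordinal lt_i_ij)
                                f`_k * g`_(i + j - k)).
  apply: (big_ind (dvdr a)) => [|x y|k]; [exact: dvdr0 | exact: dvdrD |].
  rewrite -val_eqE /= => ki.
  case: (ltngtP k i) => [lt_ki|lt_ik|]; last by move/eqP: ki.
    by apply: dvdr_mulr; apply: NNPP; apply: fi_min.
  apply: dvdr_mull; apply: NNPP; apply: gj_min.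
  by rewrite ltn_subLR ?ltn_add2r // -ltnS.
by rewrite addrC => /(dvdr_addr _ other_terms) /a_prime [].
Qed.

Lemma pseudo_bezout f g : f != 0 -> exists r, [/\ r != 0,
  exists u v, r = u * f + v * g,
  exists2 c, c != 0 & dvdr r (c%:P * f) &
  exists2 c, c != 0 & dvdr r (c%:P * g)].
Proof.
move=> f0; pose comb h := exists u v, h = u * f + v * g.
have combD h h' : comb h -> comb h' -> comb (h + h').
  move=> [u [v ->]] [u' [v' ->]]; exists (u + u'), (v + v').
  by rewrite !mulrDl addrACA.
have combMl w h : comb h -> comb (w * h).
  by move=> [u [v ->]]; exists (w * u), (w * v); rewrite mulrDr !mulrA.
have comb_f : comb f by exists 1, 0; rewrite mul0r addr0 mul1r.
have comb_g : comb g by exists 0, 1; rewrite mul0r add0r mul1r.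
have : exists n r, [/\ comb r, r != 0 & size r = n] by exists (size f), f.
(* A member r of (f, g) of minimal size: pseudo-dividing any member of (f, g)
   by r leaves a remainder in (f, g) of smaller size, hence zero. *)
case/classical_ex_minn => _ [[r [comb_r r0 <-]] r_min].
have r_pdiv h : comb h -> exists2 c, c != 0 & dvdr r (c%:P * h).
  move=> comb_h; exists (lead_coef r ^+ Pdiv.Idomain.scalp h r).
    exact: Pdiv.Idomain.lc_expn_scalp_neq0.
  exists (h %/ r); have := Pdiv.Idomain.divp_eq h r; rewrite -mul_polyC.
  have [-> ->|rem0] := eqVneq (h %% r) 0; first by rewrite addr0.
  move=> ediv; exfalso; apply: (r_min (size (h %% r))).
    exact: Pdiv.Idomain.ltn_modpN0.
  exists (h %% r); split=> //; rewrite -[h %% r](addKr (h %/ r * r)) -ediv.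
  apply: combD; last exact: combMl.
  by rewrite -mulN1r; apply/combMl/combMl.
by exists r; split=> //; apply: r_pdiv.
Qed.

Definition primitive p := forall a, primer a -> ~ dvdr a%:P p.

Lemma irreducible_primitive p : irreducibler p -> (1 < size p)%N -> primitive p.
Proof.
case=> _ _ p_irr sp a [aP0 aNU _] [q ep].
case: (p_irr _ _ ep) => [/poly_unit_size|].
  by move: sp; rewrite ep mulrC mul_polyC size_scale // => /[swap] ->.
by rewrite polyC_unit (negbTE aNU).
Qed.

Section Factorial.
Hypothesis factorizable : has_irreducible_factorizations A.
Hypothesis irreducible_prime : irreducibles_prime A.

Lemma primitive_dvdr_mulCl p e g :
  primitive p -> e != 0 -> dvdr p (e%:P * g) -> dvdr p g.
Proof.
move=> p_prim /(prime_factorization factorizable irreducible_prime).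
case=> s [u Uu [s_prime ->]]; elim: s g s_prime => [|a s IH] g s_prime.
  rewrite big_nil mulr1 => /(dvdr_mull (u^-1)%:P).
  by rewrite mulrA -polyCM mulVr // mul1r.
have a_prime : primer a by apply: s_prime; rewrite mem_head.
have [a0 _ _] := a_prime; have [_ _ aP_prime] := primer_polyC a_prime.
rewrite big_cons mulrCA polyCM -mulrA => -[q eq].
have : dvdr a%:P (q * p) by rewrite -eq; apply/dvdr_mulr/dvdr_refl.
case/aP_prime => [[q' eq']|/p_prim//].
apply: IH => [x xs|]; first by apply: s_prime; rewrite in_cons xs orbT.
exists q'; apply: (@mulfI _ a%:P); first by rewrite polyC_eq0.
by rewrite eq mulrA [a%:P * q']mulrC -eq'.
Qed.

Lemma split_polyC_mul c p q r : c != 0 -> c%:P * p = q * r ->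
  exists e r', [/\ e != 0, r = e%:P * r' & dvdr r' p].
Proof.
move=> /(prime_factorization factorizable irreducible_prime).
case=> s [u Uu [s_prime ->]]; elim: s q r s_prime => [|a s IH] q r s_prime.
  rewrite big_nil mulr1 => eq; exists 1, r; split; rewrite ?oner_neq0 ?mul1r //.
  by exists ((u^-1)%:P * q); rewrite -mulrA -eq mulrA -polyCM mulVr ?mul1r.
have a_prime : primer a by apply: s_prime; rewrite mem_head.
have {}s_prime : {in s, forall x, primer x}.
  by move=> x xs; apply: s_prime; rewrite in_cons xs orbT.
have [a0 _ _] := a_prime; have [_ _ aP_prime] := primer_polyC a_prime.
have aP0 : a%:P != 0 by rewrite polyC_eq0.
rewrite big_cons mulrCA polyCM -!mulrA => eq.
have : dvdr a%:P (q * r) by rewrite -eq; apply/dvdr_mulr/dvdr_refl.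
case/aP_prime => [[q1 eq1]|[r1 er1]].
  apply: (IH q1 r s_prime); apply: (mulfI aP0).
  by rewrite eq eq1 mulrCA mulrA.
have [|e [r' [e0 er' r'p]]] := IH q r1 s_prime.
  by apply: (mulfI aP0); rewrite eq er1 mulrA mulrC.
exists (e * a), r'; split=> //; first by rewrite mulf_neq0.
by rewrite er1 er' polyCM mulrAC.
Qed.

Lemma irreducible_poly_prime p : irreducibler p -> (1 < size p)%N -> primer p.
Proof.
move=> p_irr sp; have p_prim := irreducible_primitive p_irr sp.
case: (p_irr) => p0 pNU p_irr'; split=> // f g pfg.
have [pf|npf] := classic (dvdr p f); [by left | right].
have f0 : f != 0 by apply/eqP=> f0; apply: npf; rewrite f0; apply: dvdr0.
(* Either the pseudo-gcd r of f and p is a constant, and then p | r g, or r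
   and p share a factor r' of positive degree, which must be associated to p. *)
have [r [r0 [u [v er]] [c1 c10 rc1f] [c2 c20 rc2p]]] := pseudo_bezout p f0.
have [sr|sr] := leqP (size r) 1.
  have er0 : r = (r`_0)%:P by apply: size1_polyC.
  apply: (primitive_dvdr_mulCl p_prim (e := r`_0)).
    by apply: contra r0 => /eqP r00; rewrite er0 r00.
  rewrite -er0 er mulrDl -!mulrA; apply: dvdrD; first exact: dvdr_mull.
  exact/dvdr_mull/dvdr_mulr/dvdr_refl.
case: rc2p => q eq; have [e [r' [e0 er' [w ep]]]] := split_polyC_mul c20 eq.
case: (p_irr' _ _ ep) => [Uw|/poly_unit_size r'1]; last first.
  by move: sr; rewrite er' mul_polyC size_scale // r'1.
exfalso; apply: npf; apply: (primitive_dvdr_mulCl p_prim c10).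
apply: dvdr_trans rc1f; rewrite er'; apply: dvdr_mull.
by exists w^-1; rewrite ep mulKr.
Qed.

Lemma poly_irreducibles_prime : irreducibles_prime {poly A}.
Proof.
move=> p p_irr; have [sp|] := leqP (size p) 1; last exact: irreducible_poly_prime.
have ep : p = (p`_0)%:P by apply: size1_polyC.
case: p_irr => p0 pNU p_irr; rewrite ep; apply/primer_polyC/irreducible_prime.
split; first by apply: contra p0 => /eqP p00; rewrite ep p00.
  by rewrite -polyC_unit -ep.
move=> b c e; have /p_irr : p = b%:P * c%:P by rewrite ep e polyCM.
by rewrite !polyC_unit.
Qed.

End Factorial.

End GaussLemma.

Lemma irreducibles_prime_iso (A B : idomainType) (phi : {rmorphism A -> B})
    (psi : B -> A) :
  cancel phi psi -> cancel psi phi -> irreducibles_prime B -> irreducibles_prime A.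
Proof.
move=> phiK psiK B_prime.
have psiM x y : psi (x * y) = psi x * psi y.
  by rewrite -{1}(psiK x) -{1}(psiK y) -rmorphM phiK.
have phi_unit a : (phi a \is a GRing.unit) = (a \is a GRing.unit).
  apply/idP/idP=> [/unitrPr [y ay1]|/(rmorph_unit phi)//]; apply/unitrPr.
  by exists (psi y); rewrite -(phiK a) -psiM ay1 -(rmorph1 phi) phiK.
have psi_unit b : (psi b \is a GRing.unit) = (b \is a GRing.unit).
  by rewrite -phi_unit psiK.
have phi_dvdr a b : dvdr (phi a) (phi b) -> dvdr a b.
  by move=> [q eq]; exists (psi q); rewrite -(phiK b) eq psiM phiK.
move=> a [a0 aNU a_irr].
have /B_prime [_ _ phia_prime] : irreducibler (phi a).
  split; first by apply: contra a0 => /eqP pa0; rewrite -(phiK a) pa0 -(rmorph0 phi) phiK.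
    by rewrite phi_unit.
  move=> b c e; have /a_irr : a = psi b * psi c by rewrite -psiM -e phiK.
  by rewrite !psi_unit.
split=> // x y [q eq].
have : dvdr (phi a) (phi x * phi y) by exists (phi q); rewrite -!rmorphM eq.
by case/phia_prime=> /phi_dvdr; [left | right].
Qed.

Local Notation widen := (widen_ord (leqnSn _)).

Section MuniIso.
Variables (k : fieldType) (n : nat).

Lemma muniX (m : 'X_{1..n.+1}) : muni 'X_[m] =
  ('X_[[multinom m (widen i) | i < n]] : {mpoly k[n]})%:P * 'X^(m ord_max).
Proof. by rewrite muniE msuppX big_seq1 mcoeffX eqxx scale1r mul_polyC. Qed.

Lemma muni_mwiden (c : {mpoly k[n]}) : muni (mwiden c) = c%:P.
Proof.
rewrite (mpolyE c); elim: (msupp c) => [|m s IH].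
  by rewrite !big_nil mwiden0 muni0.
rewrite !big_cons mwidenD muniD IH polyCD; congr (_ + _).
rewrite mwidenZ muniZ mwidenX muniX mnmwiden_ordmax expr0 mulr1.
rewrite -mul_polyC -polyCM mul_mpolyC; congr (_ *: 'X_[_])%:P.
by apply/mnmP => i; rewrite mnmE mnmwiden_widen.
Qed.

Lemma muni_Xmax : muni ('X_ord_max : {mpoly k[n.+1]}) = 'X.
Proof.
rewrite muniX /mnm1 !mnmE eqxx expr1.
rewrite (_ : [multinom _ | i < n] = 0%MM) ?mpolyX0 ?mul1r //.
apply/mnmP => i; rewrite !mnmE; apply/eqP; rewrite eqb0.
by rewrite -val_eqE /= neq_ltn ltn_ord orbT.
Qed.

Lemma mmultiK : cancel (@mmulti n k) (@muni n k).
Proof.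
move=> q; rewrite /mmulti raddf_sum /=.
under eq_bigr => i _ do rewrite rmorphM rmorphXn /= muni_mwiden muni_Xmax mul_polyC.
by rewrite -poly_def coefK.
Qed.

Lemma mmulti_sum_leq (q : {poly {mpoly k[n]}}) N : (size q <= N)%N ->
  mmulti q = \sum_(i < N) mwiden q`_i * 'X_ord_max ^+ i.
Proof.
move=> le_qN; rewrite /mmulti.
rewrite (big_ord_widen N (fun i => mwiden q`_i * 'X_ord_max ^+ i)) //.
rewrite [RHS](bigID (fun i : 'I_N => (i < size q)%N)) /= [X in _ = _ + X]big1 ?addr0 //.
by move=> i; rewrite -leqNgt => qi; rewrite nth_default // mwiden0 mul0r.
Qed.

Lemma mmultiD (q1 q2 : {poly {mpoly k[n]}}) : mmulti (q1 + q2) = mmulti q1 + mmulti q2.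
Proof.
pose N := maxn (size q1) (size q2).
rewrite !(mmulti_sum_leq (N := N)) ?leq_maxl ?leq_maxr ?(leq_trans (size_polyD _ _)) //.
by rewrite -big_split /=; apply: eq_bigr => i _; rewrite coefD mwidenD mulrDl.
Qed.

Lemma mmultiZ (c : k) (q : {poly {mpoly k[n]}}) : mmulti (c%:MP *: q) = c *: mmulti q.
Proof.
rewrite (mmulti_sum_leq (N := size q)) ?size_scale_leq // /mmulti scaler_sumr.
by apply: eq_bigr => i _; rewrite coefZ mwidenM mwidenC -mulrA mul_mpolyC.
Qed.

Lemma mmultiCX (a : {mpoly k[n]}) j :
  mmulti (a%:P * 'X^j) = mwiden a * 'X_ord_max ^+ j.
Proof.
rewrite (mmulti_sum_leq (N := j.+1)); last first.
  by rewrite mul_polyC (leq_trans (size_scale_leq _ _)) // size_polyXn.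
rewrite big_ord_recr /= coefCM coefXn eqxx mulr1 big1 ?add0r //.
by move=> i _; rewrite coefCM coefXn ltn_eqF // mulr0 mwiden0 mul0r.
Qed.

Lemma muniK : cancel (@muni n k) (@mmulti n k).
Proof.
move=> p; rewrite [in LHS](mpolyE p) [in RHS](mpolyE p) raddf_sum.
elim: (msupp p) => [|m s IH]; first by rewrite !big_nil /mmulti size_poly0 big_ord0.
rewrite !big_cons mmultiD IH /= muniZ mmultiZ muniX mmultiCX mwidenX mpolyXn -mpolyXD.
congr (_ *: 'X_[_] + _); apply/mnmP => i; rewrite mnmDE mulmnE /mnm1 mnmE.
case: (ltnP i n) => lt_in.
  have -> : i = widen (Ordinal lt_in) by apply: val_inj.
  rewrite mnmwiden_widen mnmE (_ : (ord_max == widen _) = false) ?mul0n ?addn0 //.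
  by apply/negbTE; rewrite -val_eqE /= neq_ltn lt_in orbT.
have -> : i = ord_max by apply: val_inj; apply/eqP; rewrite eqn_leq lt_in -ltnS ltn_ord.
by rewrite mnmwiden_ordmax eqxx mul1n add0n.
Qed.

End MuniIso.

Section MpolyFactorial.
Variable k : fieldType.

Lemma mpoly_unit n (p : {mpoly k[n]}) :
  p != 0 -> (msize p <= 1)%N -> p \is a GRing.unit.
Proof.
move=> p0 /msize1_polyC ep; have c0 : p@_0 != 0.
  by apply: contra p0 => /eqP c0; rewrite ep c0.
by apply/unitrPr; exists (p@_0)^-1%:MP; rewrite {1}ep -mpolyCM mulfV.
Qed.

Lemma mpoly_nonunit_msize n (p : {mpoly k[n]}) :
  p != 0 -> p \isn't a GRing.unit -> (1 < msize p)%N.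
Proof. by move=> p0; rewrite ltnNge; apply: contra; apply: mpoly_unit. Qed.

Lemma mpoly_irreducible_factorizations n :
  has_irreducible_factorizations {mpoly k[n]}.
Proof.
move=> a; move: {2}(msize a) (leqnn (msize a)) => N; elim: N a => [|N IH] a.
  by rewrite leqn0 msize_poly_eq0 => /eqP->; rewrite eqxx.
move=> le_aN a0; have [Ua|aNU] := boolP (a \is a GRing.unit).
  by exists [::], a; rewrite // big_nil mulr1.
have [a_irr|a_red] := classic (irreducibler a).
  exists [:: a], 1; rewrite ?unitr1 ?big_seq1 ?mul1r //.
  by split=> // x; rewrite mem_seq1 => /eqP->.
have [b [c [eab bNU cNU]]] := reducible_split a0 aNU a_red.
have b0 : b != 0 by apply: contra a0 => /eqP b0; rewrite eab b0 mul0r.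
have c0 : c != 0 by apply: contra a0 => /eqP c0; rewrite eab c0 mulr0.
have [le_bN le_cN] : (msize b <= N /\ msize c <= N)%N.
  move: le_aN (mpoly_nonunit_msize b0 bNU) (mpoly_nonunit_msize c0 cNU).
  by rewrite eab msizeM // -subn1; move: (msize b) (msize c); lia.
have [sb [ub Ub [sb_irr eb]]] := IH b le_bN b0.
have [sc [uc Uc [sc_irr ec]]] := IH c le_cN c0.
exists (sb ++ sc), (ub * uc); first by rewrite unitrM Ub Uc.
split; last by rewrite eab eb ec big_cat /= mulrACA.
by move=> x; rewrite mem_cat => /orP[/sb_irr|/sc_irr].
Qed.

Lemma mpoly0_irreducibles_prime : irreducibles_prime {mpoly k[0]}.
Proof.
move=> a [a0 /negP aNU _]; exfalso; apply/aNU/mpoly_unit => //.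
rewrite msizeE; apply/bigmax_leqP_seq => m _ _.
by rewrite ltnS leqn0 mdegE big_ord0.
Qed.

Lemma mpoly_irreducibles_prime n : irreducibles_prime {mpoly k[n]}.
Proof.
elim: n => [|n IH]; first exact: mpoly0_irreducibles_prime.
apply: (irreducibles_prime_iso (@muniK k n) (@mmultiK k n)).
exact/poly_irreducibles_prime/IH/mpoly_irreducible_factorizations.
Qed.

End MpolyFactorial.

Theorem lemma3p4 (k : fieldType) (n m : nat) (f : 'I_m -> {mpoly k[n]}) :
  (2 <= m)%N ->
  gcd_one f ->
  exists h : nat -> {mpoly k[n]},
    (forall i, in_ideal f (h i)) /\
    (forall i j, i <> j -> coprime2 (h i) (h j)).
Proof.
move=> _ f_gcd1.
have munitE (d : {mpoly k[n]}) : munit d <-> d \is a GRing.unit.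
  by split=> [|/unitrPr //]; move/unitrPr.
have gcd1 d : (forall i, dvdr d (f i)) -> d \is a GRing.unit.
  by move=> /f_gcd1 /munitE.
have [h [h_ideal h_coprime]] := ideal_pairwise_coprime_seq gcd1
  (@mpoly_irreducible_factorizations k n) (@mpoly_irreducibles_prime k n).
exists h; split=> // i j ij d di dj; apply/munitE; exact: h_coprime ij d di dj.
Qed.
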